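(* Let $\rho$ be a fermionic state of $\mathsf{L}_\mathsf{F}$, $N\ge1$ and $\varepsilon>0$. The projector $P_{N,\varepsilon}(\rho)$ onto the $\varepsilon$-typical subspace of $\rho$ is (the Jordan–Wigner representative of) the Kraus operator of an admissible fermionic transformation on $\mathsf{L}_\mathsf{F}^{\boxtimes N}$.
   Context: A system $\mathsf{L}_\mathsf{F}$ of $L$ local fermionic modes is described by field operators $\varphi_1,\dots,\varphi_L$ with canonical anticommutation relations; the Jordan–Wigner isomorphism $J$ identifies the Fock basis $(\varphi_1^\dagger)^{n_1}\cdots(\varphi_L^\dagger)^{n_L}|\Omega\rangle$ with the computational basis of $L$ qubits, with $J(\varphi_i)=(\bigotimes_{l<i}\sigma^z_l)\otimes\sigma^-_i\otimes(\bigotimes_{k>i}I_k)$, extended linearly and multiplicatively. Fermionic states $\rho$ are linear combinations of products of an even number of field operators with $J(\rho)\geq0$ block-diagonal in the even/odd total-occupation subspaces; $\rho^{\boxtimes N}$ is the $N$-copy state, with $J(\rho^{\boxtimes N})=J(\rho)^{\otimes N}$. Admissible fermionic transformations are completely positive maps whose Kraus operators each are linear combinations of products of field operators with either all an even or all an odd number of factors. Typical subspace: let $J(\rho)=\sum_i p_i|x_i\rangle\langle x_i|$ be an orthonormal eigendecomposition, $X$ the random variable with values $x_i$ and probabilities $p_i$, and $S_f(\rho)=-\sum_ip_i\log_2p_i$. For a sequence $\mathbf{i}=(i_1,\dots,i_N)$ let $|x_{\mathbf{i}}\rangle=|x_{i_1}\rangle\otimes\cdots\otimes|x_{i_N}\rangle$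 and $p_{\mathbf{i}}=\prod_jp_{i_j}$; the sequence is $\varepsilon$-typical if $|\frac1N\log_2\frac{1}{p_{\mathbf{i}}}-S_f(\rho)|\leq\varepsilon$. Then $P_{N,\varepsilon}(\rho):=\sum_{\mathbf{i}\ \varepsilon\text{-typical}}|x_{\mathbf{i}}\rangle\langle x_{\mathbf{i}}|$. *)

From HB Require Import structures.
From mathcomp Require Import all_boot all_order all_algebra.
From mathcomp Require Import reals exp.
From mathcomp Require Import complex.
Set Implicit Arguments. Unset Strict Implicit. Unset Printing Implicit Defensive.
Import Order.TTheory GRing.Theory Num.Theory.
Local Open Scope ring_scope.
Local Open Scope complex_scope.

(* A system of M fermionic modes is represented (via Jordan-Wigner J) on    *)
(* the Fock / computational basis indexed by occupation configurations      *)
(* x : 'I_M -> bool.  Operators are matrices indexed by 'I_(fock_dim M), where   *)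
(* index a corresponds to the configuration enum_val a.                     *)

Definition Config (M : nat) := {ffun 'I_M -> bool}.
Definition fock_dim (M : nat) := #|Config M|.
Definition cfg (M : nat) (a : 'I_(fock_dim M)) : Config M := enum_val a.
Definition idx (M : nat) (x : Config M) : 'I_(fock_dim M) := enum_rank x.

Definition cparity (M : nat) (x : Config M) : bool := odd (\sum_(l < M) x l).

Section Fermions.
Variable R : realType.
Local Notation C := R[i].

Definition Op (M : nat) := 'M[C]_(fock_dim M).
Definition FVec (M : nat) := 'cV[C]_(fock_dim M).

Definition adj (m n : nat) (A : 'M[C]_(m, n)) : 'M[C]_(n, m) :=
  \matrix_(i, j) conjc (A j i).

(* J(phi_i) = (prod_{l<i} sigma^z_l) sigma^-_i : it maps |x> with x_i = 1 to *)
(* (-1)^(sum_{l<i} x_l) |x with x_i := 0>, and |x> with x_i = 0 to 0.       *)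
Definition jw_sign (M : nat) (x : Config M) (i : 'I_M) : C :=
  (-1) ^+ (\sum_(l < M | (l < i)%N) (x l : nat)).

Definition field_op (M : nat) (i : 'I_M) : Op M :=
  \matrix_(a, b)
    (let y := cfg a in let x := cfg b in
     if x i && (y == [ffun l => (l != i) && x l]) then jw_sign x i else 0).

Inductive fop (M : nat) := Ann of 'I_M | Cre of 'I_M.

Definition fop_mx (M : nat) (f : fop M) : Op M :=
  match f with Ann i => field_op i | Cre i => adj (field_op i) end.

Definition word_op (M : nat) (w : seq (fop M)) : Op M :=
  foldr (fun f A => fop_mx f *m A) 1%:M w.

Definition in_parity_span (M : nat) (p : bool) (K : Op M) : Prop :=
  exists s : seq (C * seq (fop M)),
    all (fun cw => odd (size cw.2) == p) s /\
    K = \sum_(cw <- s) cw.1 *: word_op cw.2.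

Definition parity_homogeneous (M : nat) (K : Op M) : Prop :=
  exists p : bool, in_parity_span p K.

Definition psd (M : nat) (A : Op M) : Prop :=
  forall v : FVec M, 0 <= (adj v *m A *m v) 0 0.

(* Admissible fermionic transformation given by Kraus operators ks:         *)
(* each Kraus operator is parity homogeneous; the map                       *)
(* rho |-> sum_k K rho K^dagger is completely positive, and we also require *)
(* it to be trace non-increasing (sum_k K^dagger K <= 1).                   *)
Definition admissible_kraus (M : nat) (ks : seq (Op M)) : Prop :=
  (forall K, K \in ks -> parity_homogeneous K) /\
  psd (1%:M - \sum_(K <- ks) adj K *m K).

Definition fermionic_state (M : nat) (rho : Op M) : Prop :=
  [/\ in_parity_span false rho,
      psd rho,
      (forall a b, cparity (cfg a) != cparity (cfg b) -> rho a b = 0)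
    & \tr rho = 1].

Definition eigendecomposition (M : nat) (rho : Op M)
    (x : 'I_(fock_dim M) -> FVec M) (p : 'I_(fock_dim M) -> R) : Prop :=
  (forall i j, adj (x i) *m x j = ((i == j)%:R : C)%:M) /\
  rho = \sum_i (p i)%:C *: (x i *m adj (x i)).

Definition log2 (y : R) : R := ln y / ln 2.

Definition xlog2x (y : R) : R := if y == 0 then 0 else y * log2 y.

Definition entropy (M : nat) (p : 'I_(fock_dim M) -> R) : R :=
  - \sum_i xlog2x (p i).

(* mode l of copy j (0-based) is mode j*L + l of the composite system, so   *)
(* that J(rho^{boxtimes N}) = J(rho)^{otimes N}.                            *)
Lemma modeIdx_subproof (N L : nat) (j : 'I_N) (l : 'I_L) : (j * L + l < N * L)%N.
Proof.
have jN := ltn_ord j; have lL := ltn_ord l.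
apply: (@leq_trans (j * L + L)); first by rewrite ltn_add2l.
by rewrite -mulSnr leq_mul2r ltn_ord orbT.
Qed.

Definition modeIdx (N L : nat) (j : 'I_N) (l : 'I_L) : 'I_(N * L) :=
  Ordinal (modeIdx_subproof j l).

Definition block (N L : nat) (j : 'I_N) (c : Config (N * L)) : Config L :=
  [ffun l => c (modeIdx j l)].

(* |x_ii> = |x_{i_1}> (x) ... (x) |x_{i_N}> *)
Definition tens_vec (N L : nat) (x : 'I_(fock_dim L) -> FVec L)
    (s : {ffun 'I_N -> 'I_(fock_dim L)}) : FVec (N * L) :=
  \col_a \prod_(j < N) x (s j) (idx (block j (cfg a))) 0.

Definition seq_prob (N L : nat) (p : 'I_(fock_dim L) -> R)
    (s : {ffun 'I_N -> 'I_(fock_dim L)}) : R := \prod_(j < N) p (s j).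

(* epsilon-typical sequences; sequences of probability 0 have             *)
(* (1/N) log2 (1/p) = +oo and are never typical.                          *)
Definition typical (N L : nat) (p : 'I_(fock_dim L) -> R) (eps : R)
    (s : {ffun 'I_N -> 'I_(fock_dim L)}) : bool :=
  (0 < seq_prob p s) &&
  (`| (N%:R)^-1 * log2 ((seq_prob p s)^-1) - entropy p | <= eps).

Definition typical_projector (N L : nat) (x : 'I_(fock_dim L) -> FVec L)
    (p : 'I_(fock_dim L) -> R) (eps : R) : Op (N * L) :=
  \sum_(s : {ffun 'I_N -> 'I_(fock_dim L)} | typical p eps s)
     tens_vec x s *m adj (tens_vec x s).

End Fermions.

From HB Require Import structures.
From mathcomp Require Import all_boot all_order all_algebra.
From mathcomp Require Import reals exp.
From mathcomp Require Import complex.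
From mathcomp Require Import zify ring.
Import Order.TTheory GRing.Theory Num.Theory.
Local Open Scope ring_scope.
Local Open Scope complex_scope.

Set Implicit Arguments.
Unset Strict Implicit.
Unset Printing Implicit Defensive.

(* The typical projector P is a sum of rank-one projectors onto orthonormal
   product eigenvectors of ρ^⊗N, so 1 - P†P = (1 - P)†(1 - P) ≥ 0 and it only
   remains to see that P is even.  As ρ has no coherences between sectors of
   different parity, the parity operator Z commutes with ρ; in the eigenbasis
   of ρ it becomes a unitary K that only mixes eigenvectors with equal
   eigenvalue.  The parity of N copies acts on product eigenvectors as K^⊗N,
   which only mixes index sequences s, t with p (s j) = p (t j) for all j;
   these are typical or not simultaneously, hence Z P Z = P, i.e. P has no
   entries between sectors of different parity.  Finally, every such operator
   is a combination of even words: the matrix unit |a><b| is, up to a nonzero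
   factor, (creators of a) |Ω><Ω| (annihilators of b), and the vacuum
   projector |Ω><Ω| is the product of the even words φ_i φ_i†. *)

Lemma mulmx_delta_entry (F : pzSemiRingType) m n k (A : 'M[F]_(m, n))
    (a : 'I_m) (b : 'I_n) (c : 'I_k) d :
  (A *m delta_mx b c) a d = A a b * (d == c)%:R.
Proof.
rewrite mxE (bigD1 b) //= big1 => [|l lb]; rewrite !mxE.
  by rewrite eqxx addr0.
by rewrite (negbTE lb) mulr0.
Qed.

Lemma prod_eq_ffun (F : comPzSemiRingType) (I J : finType) (s t : {ffun I -> J}) :
  \prod_(i : I) ((s i == t i)%:R : F) = (s == t)%:R.
Proof.
have [->|st] := eqVneq s t; first by rewrite big1 // => i _; rewrite eqxx.
have [i /negbTE sti|same] := pickP (fun i => s i != t i).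
  by rewrite (bigD1 i) //= sti mul0r.
by case/eqP: st; apply/ffunP => i; move/negbFE/eqP: (same i).
Qed.

Lemma commute_diag_mx_eq0 (F : idomainType) n (d : 'rV[F]_n) (A : 'M_n) i j :
  A *m diag_mx d = diag_mx d *m A -> d 0 i != d 0 j -> A i j = 0.
Proof.
move/matrixP/(_ i j); rewrite mul_mx_diag mul_diag_mx !mxE => /eqP.
rewrite mulrC -subr_eq0 -mulrBl mulf_eq0 subr_eq0 eq_sym => /orP[/eqP->|/eqP //].
by rewrite eqxx.
Qed.

Section Adjoint.
Variable R : realType.
Local Notation C := R[i].

Lemma adjK m n (A : 'M[C]_(m, n)) : adj (adj A) = A.
Proof. by apply/matrixP=> i j; rewrite !mxE conjcK. Qed.

Lemma adj_mul m n k (A : 'M[C]_(m, n)) (B : 'M[C]_(n, k)) :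
  adj (A *m B) = adj B *m adj A.
Proof.
apply/matrixP=> i j; rewrite !mxE rmorph_sum; apply: eq_bigr => l _.
by rewrite !mxE rmorphM mulrC.
Qed.

Lemma adjD m n (A B : 'M[C]_(m, n)) : adj (A + B) = adj A + adj B.
Proof. by apply/matrixP=> i j; rewrite !mxE rmorphD. Qed.

Lemma adjB m n (A B : 'M[C]_(m, n)) : adj (A - B) = adj A - adj B.
Proof. by apply/matrixP=> i j; rewrite !mxE rmorphB. Qed.

Lemma adjZ m n c (A : 'M[C]_(m, n)) : adj (c *: A) = conjc c *: adj A.
Proof. by apply/matrixP=> i j; rewrite !mxE rmorphM. Qed.

Lemma adj_sum m n I (r : seq I) (P : pred I) (F : I -> 'M[C]_(m, n)) :
  adj (\sum_(i <- r | P i) F i) = \sum_(i <- r | P i) adj (F i).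
Proof.
elim/big_rec2: _ => [|i A B _ <-]; last by rewrite adjD.
by apply/matrixP=> i j; rewrite !mxE conjc0.
Qed.

Lemma adj1 n : adj (1%:M : 'M[C]_n) = 1%:M.
Proof. by apply/matrixP=> i j; rewrite !mxE conjc_nat eq_sym. Qed.

Lemma adj_delta m n (a : 'I_m) (b : 'I_n) :
  adj (delta_mx a b : 'M[C]_(m, n)) = delta_mx b a.
Proof. by apply/matrixP=> i j; rewrite !mxE conjc_nat andbC. Qed.

Lemma conjc_sign (k : nat) : conjc ((-1) ^+ k : C) = (-1) ^+ k.
Proof. by rewrite rmorphXn rmorphN1. Qed.

End Adjoint.

Section Positivity.
Variable R : realType.

Lemma psd_gram M (B : Op R M) : psd (adj B *m B).
Proof.
move=> v; rewrite mulmxA -adj_mul -mulmxA mxE.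
by apply: sumr_ge0 => i _; rewrite !mxE mulrC mulcJ_ge0.
Qed.

Lemma psd_one_sub_projector M (P : Op R M) :
  adj P = P -> P *m P = P -> psd (1%:M - adj P *m P).
Proof.
move=> P_herm P_idem.
have -> : 1%:M - adj P *m P = adj (1%:M - P) *m (1%:M - P).
  by rewrite adjB adj1 P_herm mulmxBl !mulmxBr P_idem !mul1mx mulmx1 subrr subr0.
exact: psd_gram.
Qed.

Lemma psd_one_sub_orthonormal_projector M (I : finType) (P : pred I)
    (u : I -> FVec R M) :
  (forall s t, adj (u s) *m u t = ((s == t)%:R)%:M) ->
  psd (1%:M - adj (\sum_(s | P s) u s *m adj (u s)) *m \sum_(s | P s) u s *m adj (u s)).
Proof.
move=> u_ortho; apply: psd_one_sub_projector.
  by rewrite adj_sum; apply: eq_bigr => s _; rewrite adj_mul adjK.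
rewrite {1}mulmx_suml; apply: eq_bigr => s Ps.
rewrite mulmx_sumr (bigD1 s) //= big1 => [|t /andP[_ ts]].
  by rewrite addr0 -mulmxA (mulmxA (adj (u s))) u_ortho eqxx mul1mx.
rewrite -mulmxA (mulmxA (adj (u s))) u_ortho eq_sym (negbTE ts).
by rewrite mul_scalar_mx scale0r mulmx0.
Qed.

End Positivity.

Section ParitySpan.
Variables (R : realType) (M : nat).
Implicit Types (A B : Op R M) (w : seq (fop M)).

Lemma parity_span0 p : in_parity_span p (0 : Op R M).
Proof. by exists [::]; rewrite big_nil. Qed.

Lemma parity_spanD p A B :
  in_parity_span p A -> in_parity_span p B -> in_parity_span p (A + B).
Proof.
move=> [s [hs ->]] [t [ht ->]]; exists (s ++ t).
by rewrite all_cat hs ht big_cat.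
Qed.

Lemma parity_spanZ p c A : in_parity_span p A -> in_parity_span p (c *: A).
Proof.
move=> [s [hs ->]]; exists [seq (c * cw.1, cw.2) | cw <- s]; split.
  by rewrite all_map.
by rewrite big_map scaler_sumr; apply: eq_bigr => cw _; rewrite scalerA.
Qed.

Lemma parity_span_sum p I (r : seq I) (a : pred I) (F : I -> Op R M) :
  all a r -> (forall i, a i -> in_parity_span p (F i)) ->
  in_parity_span p (\sum_(i <- r) F i).
Proof.
elim: r => [|i r IH] /=; first by rewrite big_nil => _ _; apply: parity_span0.
case/andP=> ai ar hF; rewrite big_cons.
by apply: parity_spanD; [apply: hF | apply: IH].
Qed.

Lemma word_op_cat w1 w2 : word_op R (w1 ++ w2) = word_op R w1 *m word_op R w2.
Proof. by elim: w1 => [|f w1 IH] /=; rewrite ?mul1mx // IH mulmxA. Qed.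

Lemma parity_span_word w : in_parity_span (odd (size w)) (word_op R w).
Proof. by exists [:: (1, w)]; rewrite /= eqxx big_seq1 scale1r. Qed.

Lemma parity_spanM p q A B :
  in_parity_span p A -> in_parity_span q B -> in_parity_span (p (+) q) (A *m B).
Proof.
move=> [s [hs ->]] [t [ht ->]].
rewrite mulmx_suml; apply: (parity_span_sum hs) => -[a v] /eqP /= <-.
rewrite mulmx_sumr; apply: (parity_span_sum ht) => -[b u] /eqP /= <-.
rewrite -scalemxAl -scalemxAr -word_op_cat -oddD -size_cat.
by do 2 apply: parity_spanZ; apply: parity_span_word.
Qed.

Definition fop_adj (f : fop M) : fop M :=
  match f with Ann i => Cre i | Cre i => Ann i end.

Lemma adj_word_op w : adj (word_op R w) = word_op R (rev (map fop_adj w)).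
Proof.
elim: w => [|f w IH] /=; first exact: adj1.
rewrite adj_mul IH rev_cons -cats1 word_op_cat /= mulmx1.
by case: f => i //=; rewrite adjK.
Qed.

Lemma parity_span_adj p A : in_parity_span p A -> in_parity_span p (adj A).
Proof.
move=> [s [hs ->]]; rewrite adj_sum.
apply: (parity_span_sum hs) => -[c w] /eqP /= <-.
rewrite adjZ adj_word_op; apply: parity_spanZ.
by rewrite -(size_map fop_adj) -size_rev; apply: parity_span_word.
Qed.

End ParitySpan.

Section FockBasis.
Variables (R : realType) (M : nat).
Local Notation C := R[i].
Implicit Types (a b c : 'I_(fock_dim M)) (x y : Config M).

Lemma idxK : cancel (@idx M) (@cfg M). Proof. exact: enum_rankK. Qed.
Lemma cfgK : cancel (@cfg M) (@idx M). Proof. exact: enum_valK. Qed.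

Lemma eq_cfg a y : (cfg a == y) = (a == idx y).
Proof. by apply/eqP/eqP => [<-|->]; rewrite ?cfgK ?idxK. Qed.

Definition clear_mode (i : 'I_M) x : Config M := [ffun l => (l != i) && x l].
Definition fill_mode (i : 'I_M) x : Config M := [ffun l => (l == i) || x l].

Lemma clear_fill_mode i x : ~~ x i -> clear_mode i (fill_mode i x) = x.
Proof.
move=> xi; apply/ffunP => l; rewrite !ffunE.
by case: (eqVneq l i) => [->|]; rewrite ?(negbTE xi).
Qed.

Lemma clear_modeP i x y :
  x i && (y == clear_mode i x) = ~~ y i && (x == fill_mode i y).
Proof.
apply/andP/andP => [[xi /eqP ->]|[yi /eqP ->]]; rewrite ffunE eqxx //=.
  split=> //; apply/eqP/ffunP => l; rewrite !ffunE.
  by case: (eqVneq l i) => [->|].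
by split; rewrite ?clear_fill_mode.
Qed.

Lemma field_op_delta i b (c : 'I_(fock_dim M)) :
  field_op R i *m delta_mx b c =
  if cfg b i then jw_sign R (cfg b) i *: delta_mx (idx (clear_mode i (cfg b))) c
  else 0.
Proof.
apply/matrixP => a d; rewrite mulmx_delta_entry !mxE /= -/(clear_mode i (cfg b)).
case: (cfg b i); last by rewrite mxE mul0r.
by rewrite !mxE eq_cfg /=; case: (a == _); rewrite /= ?mul0r ?mulr0.
Qed.

Lemma adj_field_op_delta i b (c : 'I_(fock_dim M)) :
  adj (field_op R i) *m delta_mx b c =
  if cfg b i then 0
  else conjc (jw_sign R (fill_mode i (cfg b)) i) *:
       delta_mx (idx (fill_mode i (cfg b))) c.
Proof.
apply/matrixP => a d.
rewrite mulmx_delta_entry !mxE /= -/(clear_mode i (cfg a)) clear_modeP.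
case: (cfg b i); rewrite ?andFb ?andTb; first by rewrite rmorph0 mxE mul0r.
rewrite !mxE eq_cfg; case: eqP => [->|_]; last by rewrite rmorph0 mul0r andFb mulr0.
by rewrite idxK.
Qed.

Lemma hole_projector_delta i b (c : 'I_(fock_dim M)) :
  word_op R [:: Ann i; Cre i] *m delta_mx b c = (~~ cfg b i)%:R *: delta_mx b c.
Proof.
rewrite /= mulmx1 -mulmxA adj_field_op_delta.
case: ifP => bi; first by rewrite mulmx0 scale0r.
rewrite -scalemxAr field_op_delta idxK ffunE eqxx scalerA.
rewrite clear_fill_mode ?bi // cfgK /jw_sign conjc_sign.
by rewrite -exprMn mulrNN mulr1 expr1n.
Qed.

Definition vacuum : 'I_(fock_dim M) := idx [ffun => false].

Definition vacuum_word : seq (fop M) :=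
  flatten [seq [:: Ann i; Cre i] | i <- enum 'I_M].

Lemma vacuum_word_op : word_op R vacuum_word = delta_mx vacuum vacuum.
Proof.
have holes r b (c : 'I_(fock_dim M)) :
    word_op R (flatten [seq [:: Ann i; Cre i] | i <- r]) *m delta_mx b c =
    (all (fun l => ~~ cfg b l) r)%:R *: delta_mx b c.
  elim: r => [|i r IH]; first by rewrite /= mul1mx scale1r.
  rewrite (_ : flatten _ =
    [:: Ann i; Cre i] ++ flatten [seq [:: Ann j; Cre j] | j <- r]) //.
  rewrite word_op_cat -mulmxA IH -scalemxAr hole_projector_delta /=.
  by rewrite scalerA -natrM mulnb andbC.
apply/matrixP => a d.
have -> : word_op R vacuum_word a d = (word_op R vacuum_word *m delta_mx d d) a d.
  by rewrite mulmx_delta_entry eqxx mulr1.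
rewrite holes !mxE.
have -> : all (fun l => ~~ cfg d l) (enum 'I_M) = (d == vacuum).
  rewrite -eq_cfg; apply/allP/eqP => [h|-> l _]; last by rewrite ffunE.
  by apply/ffunP => l; rewrite ffunE; apply/negbTE/h; rewrite mem_enum.
rewrite eqxx andbT -natrM mulnb.
by case: (eqVneq d vacuum) => [->|]; rewrite ?andbT ?andbF.
Qed.

Lemma parity_span_vacuum : in_parity_span false (delta_mx vacuum vacuum : Op R M).
Proof.
rewrite -vacuum_word_op; have := parity_span_word R vacuum_word.
suff -> : odd (size vacuum_word) = false by [].
by rewrite /vacuum_word; elim: (enum 'I_M) => // i r IH; rewrite /= IH.
Qed.

Lemma creators_vacuum (r : seq 'I_M) c : uniq r ->
  exists2 k : C, k != 0 &
    word_op R (map (@Cre M) r) *m delta_mx vacuum c =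
    k *: delta_mx (idx [ffun l => l \in r]) c.
Proof.
elim: r => [_|i r IH /andP[ir /IH[k k0 hk]]].
  exists 1; rewrite ?oner_neq0 // mul1mx scale1r.
  by congr (delta_mx (idx _) c); apply/ffunP => l; rewrite !ffunE.
rewrite /= -mulmxA hk -scalemxAr adj_field_op_delta idxK ffunE (negbTE ir) /=.
exists (k * conjc (jw_sign R (fill_mode i [ffun l => l \in r]) i)).
  by rewrite mulf_neq0 // /jw_sign conjc_sign expf_neq0 // oppr_eq0 oner_eq0.
rewrite scalerA; congr (_ *: delta_mx (idx _) c).
by apply/ffunP => l; rewrite !ffunE in_cons.
Qed.

Lemma cparity_card x : cparity x = odd #|[pred l | x l]|.
Proof.
rewrite /cparity -sum1_card; congr odd; rewrite [RHS]big_mkcond.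
by apply: eq_bigr => l _; rewrite inE; case: (x l).
Qed.

Lemma parity_span_delta_vacuum a :
  in_parity_span (cparity (cfg a)) (delta_mx a vacuum : Op R M).
Proof.
set r := enum [pred l | cfg a l].
have [k k0] := creators_vacuum vacuum (enum_uniq [pred l | cfg a l]).
have -> : [ffun l => l \in r] = cfg a by apply/ffunP => l; rewrite ffunE mem_enum.
rewrite cfgK => hk.
have -> : delta_mx a vacuum =
    k^-1 *: (word_op R (map (@Cre M) r) *m delta_mx vacuum vacuum).
  by rewrite hk scalerA mulVf // scale1r.
apply: parity_spanZ; rewrite -(addbF (cparity _)) cparity_card cardE -(size_map (@Cre M)).
exact: parity_spanM (parity_span_word _ _) parity_span_vacuum.
Qed.

Lemma parity_span_delta a b :
  in_parity_span (cparity (cfg a) (+) cparity (cfg b)) (delta_mx a b : Op R M).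
Proof.
rewrite -(mul_delta_mx vacuum); apply: parity_spanM.
  exact: parity_span_delta_vacuum.
by rewrite -adj_delta; apply/parity_span_adj/parity_span_delta_vacuum.
Qed.

Definition parity_preserving (A : Op R M) : Prop :=
  forall a b, cparity (cfg a) != cparity (cfg b) -> A a b = 0.

Lemma parity_preserving_even (A : Op R M) :
  parity_preserving A -> in_parity_span false A.
Proof.
move=> hA; rewrite (matrix_sum_delta A).
apply: (parity_span_sum (a := predT)) => [|a _]; first exact: all_predT.
apply: (parity_span_sum (a := predT)) => [|b _]; first exact: all_predT.
have [e|ne] := eqVneq (cparity (cfg a)) (cparity (cfg b)).
  apply: parity_spanZ; rewrite -(addbb (cparity (cfg a))) {2}e.
  exact: parity_span_delta.
by rewrite hA // scale0r; apply: parity_span0.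
Qed.

End FockBasis.

Section CopyModes.
Variables N L : nat.

Lemma modeIdx_bij : bijective (uncurry (@modeIdx N L)).
Proof.
apply: inj_card_bij; last by rewrite card_prod !card_ord.
move=> [j l] [j' l'] /= /(congr1 val) /= e.
have ej : j = j' :> nat by have := ltn_ord l; have := ltn_ord l'; nia.
by move: e; rewrite ej => /addnI el; congr pair; apply: val_inj.
Qed.

Lemma sum_modes (F : 'I_(N * L) -> nat) :
  (\sum_(m < N * L) F m = \sum_(j < N) \sum_(l < L) F (modeIdx j l))%N.
Proof.
rewrite pair_bigA /= (reindex _ (onW_bij _ modeIdx_bij)) /=.
by apply: eq_bigr => -[j l].
Qed.

Lemma cparity_blocks (c : Config (N * L)) :
  cparity c = odd (\sum_(j < N) \sum_(l < L) block j c l).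
Proof.
rewrite /cparity sum_modes; congr odd.
by apply: eq_bigr => j _; apply: eq_bigr => l _; rewrite ffunE.
Qed.

Definition blocks (c : Config (N * L)) : {ffun 'I_N -> Config L} :=
  [ffun j => block j c].

Lemma blocks_bij : bijective blocks.
Proof.
apply: inj_card_bij.
  move=> c c' e; apply/ffunP => m; have [g _ gK] := modeIdx_bij.
  rewrite -(gK m); case: (g m) => j l /=.
  by move/(congr1 (fun f : {ffun 'I_N -> Config L} => f j l)): e; rewrite !ffunE.
by rewrite /Config !card_ffun !card_bool !card_ord -expnM mulnC.
Qed.

End CopyModes.

Section ProductStates.
Variables (R : realType) (N L : nat).
Local Notation C := R[i].
Local Notation T := (fock_dim L).

Lemma sum_cfg M (G : Config M -> C) :
  \sum_(a < fock_dim M) G (cfg a) = \sum_(c : Config M) G c.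
Proof. by rewrite (reindex _ (onW_bij _ (Bijective (@cfgK M) (@idxK M)))). Qed.

Lemma sum_prod_blocks (f : 'I_N -> Config L -> C) :
  \sum_(a < fock_dim (N * L)) \prod_(j < N) f j (block j (cfg a)) =
  \prod_(j < N) \sum_(b < T) f j (cfg b).
Proof.
rewrite (sum_cfg (fun c => \prod_(j < N) f j (block j c))).
under [RHS]eq_bigr => j _ do rewrite (sum_cfg (f j)).
rewrite bigA_distr_bigA /= (reindex _ (onW_bij _ (blocks_bij N L))) /=.
by apply: eq_bigr => c _; apply: eq_bigr => j _; rewrite ffunE.
Qed.

Variable x : 'I_T -> FVec R L.
Hypothesis x_ortho : forall i j, adj (x i) *m x j = ((i == j)%:R)%:M.

Lemma orthonormal_entry i j : \sum_b conjc (x i b 0) * x j b 0 = (i == j)%:R.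
Proof.
have := congr1 (fun A : 'M[C]_1 => A 0 0) (x_ortho i j).
by rewrite /= !mxE eqxx mulr1n => <-; apply: eq_bigr => b _; rewrite mxE.
Qed.

Lemma tens_vec_ortho (s t : {ffun 'I_N -> 'I_T}) :
  adj (tens_vec x s) *m tens_vec x t = ((s == t)%:R)%:M.
Proof.
apply/matrixP => i0 j0; rewrite !ord1 !mxE eqxx mulr1n.
under eq_bigr => a _ do rewrite !mxE rmorph_prod -big_split.
rewrite (sum_prod_blocks (fun j c => conjc (x (s j) (idx c) 0) * x (t j) (idx c) 0)).
rewrite -prod_eq_ffun; apply: eq_bigr => j _; rewrite -orthonormal_entry.
by apply: eq_bigr => b _; rewrite cfgK.
Qed.

End ProductStates.

Section TensorPower.
Variables (R : realType) (I J : finType).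
Local Notation C := R[i].
Implicit Types (k : J -> J -> C) (s t : {ffun I -> J}).

Definition tensor_power k t s : C := \prod_i k (t i) (s i).

Lemma tensor_power_unitary k :
  (forall u v, \sum_w k u w * conjc (k v w) = (u == v)%:R) ->
  forall t t', \sum_s tensor_power k t s * conjc (tensor_power k t' s) = (t == t')%:R.
Proof.
move=> k_unitary t t'.
under eq_bigr => s _ do rewrite /tensor_power rmorph_prod -big_split.
rewrite -(prod_eq_ffun C t t').
rewrite -(bigA_distr_bigA (fun i w => k (t i) w * conjc (k (t' i) w))) /=.
by apply: eq_bigr => i _; apply: k_unitary.
Qed.

Lemma tensor_power_intertwine (A : Type) (z : A -> C) (u : A -> J -> C) k
    (b : I -> A) s :
  (forall a w, z a * u a w = \sum_v u a v * k v w) ->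
  (\prod_i z (b i)) * (\prod_i u (b i) (s i)) =
  \sum_(t : {ffun I -> J}) (\prod_i u (b i) (t i)) * tensor_power k t s.
Proof.
move=> zu; rewrite -big_split /=; under eq_bigr => i _ do rewrite zu.
by rewrite bigA_distr_bigA /=; apply: eq_bigr => t _; rewrite -big_split.
Qed.

End TensorPower.

Section FrameCovariance.
Variables (R : realType) (S : finType) (A : Type).
Local Notation C := R[i].
Variables (w : S -> A -> C) (k : S -> S -> C) (f : S -> C) (z : A -> C).
Hypothesis z_w : forall a s, z a * w s a = \sum_t w t a * k t s.
Hypothesis k_unitary : forall t t', \sum_s k t s * conjc (k t' s) = (t == t')%:R.
Hypothesis f_k : forall t s, f s * k t s = f t * k t s.

Definition frame_op a b : C := \sum_s f s * (w s a * conjc (w s b)).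

Lemma frame_op_covariant a b : z a * conjc (z b) * frame_op a b = frame_op a b.
Proof.
have f_z_w s : f s * (z a * w s a) = \sum_t f t * w t a * k t s.
  rewrite z_w mulr_sumr; apply: eq_bigr => t _.
  by rewrite mulrCA f_k mulrCA mulrA.
have term s : z a * conjc (z b) * (f s * (w s a * conjc (w s b))) =
    \sum_t \sum_t' f t * w t a * conjc (w t' b) * (k t s * conjc (k t' s)).
  transitivity (f s * (z a * w s a) * conjc (z b * w s b)).
    by rewrite rmorphM; ring.
  rewrite f_z_w z_w rmorph_sum big_distrlr /=; apply: eq_bigr => t _.
  by apply: eq_bigr => t' _; rewrite rmorphM; ring.
rewrite /frame_op mulr_sumr; under eq_bigr => s _ do rewrite term.
rewrite exchange_big; apply: eq_bigr => t _ /=; rewrite exchange_big /=.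
under eq_bigr => t' _ do rewrite -mulr_sumr k_unitary.
rewrite (bigD1 t) //= big1 => [|t' t't]; first by rewrite eqxx mulr1 addr0 mulrA.
by rewrite eq_sym (negbTE t't) mulr0.
Qed.

End FrameCovariance.

Section ParityOperator.
Variables (R : realType) (M : nat).
Local Notation C := R[i].
Implicit Types (A : Op R M) (a b : 'I_(fock_dim M)).

Definition parity_sign a : C := (-1) ^+ cparity (cfg a).

Definition parity_mx : Op R M := diag_mx (\row_a parity_sign a).

Lemma parity_sign_sqr a : parity_sign a * parity_sign a = 1.
Proof. by rewrite -exprMn mulrNN mulr1 expr1n. Qed.

Lemma adj_parity_mx : adj parity_mx = parity_mx.
Proof.
apply/matrixP => a b; rewrite !mxE.
by case: (eqVneq a b) => [->|]; rewrite ?conjc_sign ?mulr1n ?mulr0n ?conjc0.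
Qed.

Lemma parity_mx_invol : parity_mx *m parity_mx = 1%:M.
Proof.
rewrite mulmx_diag -diag_const_mx; congr diag_mx.
by apply/rowP => a; rewrite !mxE parity_sign_sqr.
Qed.

Lemma parity_mx_commute A : parity_preserving A -> parity_mx *m A = A *m parity_mx.
Proof.
move=> hA; rewrite mul_diag_mx mul_mx_diag; apply/matrixP => a b; rewrite !mxE.
have [e|ne] := eqVneq (cparity (cfg a)) (cparity (cfg b)).
  by rewrite /parity_sign e mulrC.
by rewrite hA ?mulr0 ?mul0r.
Qed.

Lemma parity_invariant_preserving A :
  (forall a b, parity_sign a * conjc (parity_sign b) * A a b = A a b) ->
  parity_preserving A.
Proof.
move=> hA a b ne; have := hA a b; rewrite conjc_sign.
have -> : parity_sign a * parity_sign b = -1.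
  by rewrite /parity_sign -signr_addb; move: ne; case: (cparity _); case: (cparity _).
rewrite mulN1r => /eqP; rewrite -subr_eq0 -opprD oppr_eq0 -mulr2n mulrn_eq0 /=.
by move/eqP.
Qed.

End ParityOperator.

Section EigenBasis.
Variables (R : realType) (M : nat).
Local Notation C := R[i].
Local Notation n := (fock_dim M).
Variables (rho : Op R M) (x : 'I_n -> FVec R M) (p : 'I_n -> R).
Hypothesis rho_even : parity_preserving rho.
Hypothesis x_ortho : forall i j, adj (x i) *m x j = ((i == j)%:R)%:M.
Hypothesis rhoE : rho = \sum_i (p i)%:C *: (x i *m adj (x i)).

Definition eigen_mx : 'M[C]_n := \matrix_(b, i) x i b 0.

Definition eigen_parity : 'M[C]_n := adj eigen_mx *m parity_mx R M *m eigen_mx.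

Lemma eigen_mx_unitary : adj eigen_mx *m eigen_mx = 1%:M.
Proof.
apply/matrixP => i j; rewrite !mxE -(orthonormal_entry x_ortho).
by apply: eq_bigr => b _; rewrite !mxE.
Qed.

Lemma eigen_mx_unitaryV : eigen_mx *m adj eigen_mx = 1%:M.
Proof. exact: mulmx1C eigen_mx_unitary. Qed.

Lemma rho_eigen : rho = eigen_mx *m diag_mx (\row_i (p i)%:C) *m adj eigen_mx.
Proof.
rewrite mul_mx_diag; apply/matrixP => a b; rewrite rhoE summxE mxE.
by apply: eq_bigr => i _; rewrite !mxE big_ord1 !mxE mulrCA mulrA.
Qed.

Lemma eigen_parity_eq0 i j : p i != p j -> eigen_parity i j = 0.
Proof.
move=> pij; apply: (commute_diag_mx_eq0 (d := \row_i (p i)%:C)); last first.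
  by rewrite !mxE; apply: contra pij => /eqP/complexI ->.
have rhoU : rho *m eigen_mx = eigen_mx *m diag_mx (\row_i (p i)%:C).
  by rewrite rho_eigen -!mulmxA eigen_mx_unitary mulmx1.
have Urho : adj eigen_mx *m rho = diag_mx (\row_i (p i)%:C) *m adj eigen_mx.
  by rewrite rho_eigen !mulmxA eigen_mx_unitary mul1mx.
rewrite /eigen_parity -!mulmxA -rhoU (mulmxA (parity_mx R M)).
rewrite (parity_mx_commute rho_even) -(mulmxA rho) (mulmxA _ rho) Urho.
by rewrite -!mulmxA.
Qed.

Lemma eigen_parity_unitary u v :
  \sum_w eigen_parity u w * conjc (eigen_parity v w) = (u == v)%:R.
Proof.
have KK : eigen_parity *m adj eigen_parity = 1%:M.
  rewrite /eigen_parity !adj_mul adjK adj_parity_mx -!mulmxA.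
  rewrite (mulmxA eigen_mx) eigen_mx_unitaryV mul1mx (mulmxA (parity_mx R M)).
  by rewrite parity_mx_invol mul1mx eigen_mx_unitary.
have := congr1 (fun A : 'M[C]_n => A u v) KK; rewrite /= !mxE => <-.
by apply: eq_bigr => w _; rewrite !mxE.
Qed.

Lemma parity_eigen_intertwine b s :
  parity_sign R b * x s b 0 = \sum_t x t b 0 * eigen_parity t s.
Proof.
have ZU : parity_mx R M *m eigen_mx = eigen_mx *m eigen_parity.
  by rewrite /eigen_parity !mulmxA eigen_mx_unitaryV mul1mx.
have := congr1 (fun A : 'M[C]_n => A b s) ZU; rewrite /= mul_diag_mx !mxE => ->.
by apply: eq_bigr => t _; rewrite !mxE.
Qed.

End EigenBasis.

Section TypicalProjector.
Variables (R : realType) (N L : nat).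
Local Notation C := R[i].
Local Notation T := (fock_dim L).
Variables (rho : Op R L) (x : 'I_T -> FVec R L) (p : 'I_T -> R) (eps : R).
Hypothesis rho_even : parity_preserving rho.
Hypothesis x_ortho : forall i j, adj (x i) *m x j = ((i == j)%:R)%:M.
Hypothesis rhoE : rho = \sum_i (p i)%:C *: (x i *m adj (x i)).

Local Notation typ s := ((typical p eps s)%:R : C).
Local Notation K := (tensor_power (eigen_parity x)).

Lemma parity_sign_blocks (a : 'I_(fock_dim (N * L))) :
  parity_sign R a = \prod_(j < N) parity_sign R (idx (block j (cfg a))).
Proof.
rewrite /parity_sign cparity_blocks signr_odd expr_sum; apply: eq_bigr => j _.
by rewrite idxK /cparity signr_odd.
Qed.

Lemma typical_eigen_parity (t s : {ffun 'I_N -> 'I_T}) : typ s * K t s = typ t * K t s.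
Proof.
have [->|Kts] := eqVneq (K t s) 0; first by rewrite !mulr0.
suff e : seq_prob p t = seq_prob p s by rewrite /typical e.
apply: eq_bigr => j _; apply/eqP; apply: contraR Kts => pts.
by apply/prodf_eq0; exists j; rewrite // (eigen_parity_eq0 rho_even x_ortho rhoE pts).
Qed.

Lemma typical_projector_entry a b :
  typical_projector N x p eps a b =
  frame_op (fun s c => tens_vec x s c 0) (fun s => typ s) a b.
Proof.
rewrite /typical_projector /frame_op summxE big_mkcond; apply: eq_bigr => s _.
by rewrite [RHS]mulrA !mxE big_ord1 !mxE; case: (typical p eps s); rewrite ?mul1r ?mul0r.
Qed.

Lemma typical_projector_even : parity_preserving (typical_projector N x p eps).
Proof.
apply: parity_invariant_preserving => a b; rewrite typical_projector_entry.
apply: (frame_op_covariant (k := K)).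
- move=> c s; rewrite parity_sign_blocks mxE.
  under [in RHS]eq_bigr => t _ do rewrite mxE.
  apply: (tensor_power_intertwine (u := fun d i => x i d 0)) => d u.
  exact: parity_eigen_intertwine.
- exact/tensor_power_unitary/eigen_parity_unitary.
- exact: typical_eigen_parity.
Qed.

End TypicalProjector.

Theorem lemma1 (R : realType) (L N : nat) (rho : Op R L)
    (x : 'I_(fock_dim L) -> FVec R L) (p : 'I_(fock_dim L) -> R) (eps : R) :
  fermionic_state rho ->
  eigendecomposition rho x p ->
  (1 <= N)%N -> 0 < eps ->
  exists ks : seq (Op R (N * L)),
    admissible_kraus ks /\ typical_projector N x p eps \in ks.
Proof.
move=> [_ _ rho_even _] [x_ortho rhoE] _ _.
exists [:: typical_projector N x p eps]; rewrite mem_seq1 eqxx; split=> //; split.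
  move=> K; rewrite mem_seq1 => /eqP ->; exists false.
  exact/parity_preserving_even/(typical_projector_even eps rho_even x_ortho rhoE).
by rewrite big_seq1; apply/psd_one_sub_orthonormal_projector/tens_vec_ortho.
Qed.
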